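(* Assume the setting and standing assumptions described in the context, and let $d>0$ with $\Xi\subset\Omega_d=\{z\in\mathbb{R}^{2n}:|z|<d\}$. Let $p\ge1$, $\epsilon>0$, and let $\delta_0,\dots,\delta_p\in\mathbb{R}$ satisfy: $\mathcal{L}_F^p\phi(z)\le\sum_{i=0}^{p-1}\delta_i\mathcal{L}_F^i\phi(z)+\delta_p$ for all $z\in\Omega_d$; $\delta_0\phi((x,0))+\delta_p\ge\epsilon$ for all $x\in\mathrm{Z}$; and $\delta_i\ge0$ for all $i$. Let $A$ be the $(p+1)\times(p+1)$ matrix with $A_{k,k+1}=1$ for $k=1,\dots,p-1$, $p$-th row $(\delta_0,\dots,\delta_{p-1},1)$, last row zero and other entries zero; $C=(1,0,\dots,0)$. Define $$\eta(x,0)=\big(\phi((x,0)),\max(\mathcal{L}_F\phi((x,0)),0),\dots,\max(\mathcal{L}_F^{p-1}\phi((x,0)),0),\delta_p\big)^\top,\qquad \eta_1(x,t)=Ce^{At}\eta(x,0).$$ Then for every $x\in\mathrm{Z}$, the map $t\mapsto\eta_1(x,t)$ is strictly increasing for $t>0$.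
   Context: Let $f:\mathbb{R}^n\times\mathbb{R}^m\to\mathbb{R}^n$ and a feedback law $\upsilon:\mathbb{R}^n\to\mathbb{R}^m$ be given. Define $F:\mathbb{R}^{2n}\to\mathbb{R}^{2n}$ by $F(z,e)=\big(f(z,\upsilon(z+e)),\,-f(z,\upsilon(z+e))\big)$. For $x\in\mathbb{R}^n$, $\xi(t;x)$ denotes the solution of $\dot\xi=F(\xi)$ with $\xi(0;x)=(x,0)$. A triggering function $\phi:\mathbb{R}^{2n}\to\mathbb{R}$ is given. $\mathcal{L}_F^k\phi$ denotes the $k$-th Lie derivative of $\phi$ along $F$ ($\mathcal{L}_F^0\phi=\phi$). Standing assumptions: (i) $F$ is smooth and homogeneous of degree $\alpha\ge1$ with all weights $1$, i.e. $F(\lambda\xi)=\lambda^{\alpha+1}F(\xi)$ for all $\lambda>0$; (ii) $\phi$ is smooth and homogeneous of degree $\theta\ge1$ with weights $1$, i.e. $\phi(\lambda\xi)=\lambda^{\theta+1}\phi(\xi)$ for all $\lambda>0$; (iii) for every $x\ne0$, $\phi((x,0))<0$ and there exists $t_x\in(0,\infty)$ with $\phi(\xi(t_x;x))=0$; (iv) compact sets $\mathrm{Z}\subset\mathbb{R}^n$, $\Xi\subset\mathbb{R}^{2n}$ containing a neighbourhood of the origin are given such that for all $x\in\mathrm{Z}$, $t\ge0$: $\phi(\xi(t;x))\le0\Rightarrow\xi(t;x)\in\Xi$; (v) the origin is the only equilibrium of $\dot\zeta=f(\zeta,\upsilon(\zeta))$. *)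

From HB Require Import structures.
From mathcomp Require Import all_boot all_order all_algebra.
From mathcomp Require Import all_classical all_reals all_analysis.
Set Implicit Arguments. Unset Strict Implicit. Unset Printing Implicit Defensive.
Import Order.TTheory GRing.Theory Num.Theory.
Import numFieldNormedType.Exports.
Local Open Scope classical_set_scope.
Local Open Scope ring_scope.

Section Defs.
Variable R : realType.

(* Euclidean norm |z| of a row vector (the library norm on matrices is the sup norm). *)
Definition enorm (k : nat) (z : 'rV[R]_k) : R := Num.sqrt (\sum_(i < k) z 0 i ^+ 2).

Fixpoint iterD (V W : normedModType R) (vs : seq V) (g : V -> W) : V -> W :=
  match vs with
  | [::] => g
  | v :: vs' => fun z => 'D_v (iterD vs' g) z
  end.

Definition smooth (V W : normedModType R) (g : V -> W) : Prop :=
  forall (vs : seq V) (z : V), differentiable (iterD vs g) z.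

Definition lie (V : normedModType R) (F : V -> V) (phi : V -> R) : V -> R :=
  fun z => 'D_(F z) phi z.
Definition lieN (V : normedModType R) (k : nat) (F : V -> V) (phi : V -> R) : V -> R :=
  iter k (lie F) phi.

(* homogeneity with all weights 1: g(l x) = l^(deg+1) g(x) for l > 0 *)
Definition homogeneous (V W : normedModType R) (deg : R) (g : V -> W) : Prop :=
  forall (l : R) (x : V), 0 < l -> g (l *: x) = (l `^ (deg + 1)) *: g x.

(* the closed-loop error system F(z,e) = (f(z, u(z+e)), - f(z, u(z+e))) on R^(2n) = R^(n+n) *)
Definition Fsys (n m : nat) (f : 'rV[R]_n -> 'rV[R]_m -> 'rV[R]_n)
  (ups : 'rV[R]_n -> 'rV[R]_m) (xi : 'rV[R]_(n + n)) : 'rV[R]_(n + n) :=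
  let v := f (lsubmx xi) (ups (lsubmx xi + rsubmx xi)) in row_mx v (- v).

Definition expmx (k : nat) (M : 'M[R]_k) : 'M[R]_k :=
  lim ((fun N : nat => \sum_(0 <= j < N) ((j`!)%:R^-1 *: M ^+ j)) @ \oo).

(* the (p+1)x(p+1) matrix A (0-based indices): A i (i+1) = 1 for i < p-1,
   row p-1 = (delta_0, ..., delta_{p-1}, 1), last row zero *)
Definition Amx (p : nat) (delta : nat -> R) : 'M[R]_(p.+1) :=
  \matrix_(i < p.+1, j < p.+1)
    if (i.+1 < p)%N then (if j == i.+1 :> nat then 1 else 0)
    else if i == p.-1 :> nat then (if (j < p)%N then delta j else 1)
    else 0.

Definition Cmx (p : nat) : 'rV[R]_(p.+1) := \row_(j < p.+1) (if j == 0 :> nat then 1 else 0).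

Definition eta0 (p : nat) (n : nat) (F : 'rV[R]_(n + n) -> 'rV[R]_(n + n))
  (phi : 'rV[R]_(n + n) -> R) (delta : nat -> R) (x : 'rV[R]_n) : 'cV[R]_(p.+1) :=
  \col_(i < p.+1)
    if i == 0 :> nat then phi (row_mx x 0)
    else if (i < p)%N then Num.max (lieN i F phi (row_mx x 0)) 0
    else delta p.

Definition eta1 (p n : nat) (F : 'rV[R]_(n + n) -> 'rV[R]_(n + n))
  (phi : 'rV[R]_(n + n) -> R) (delta : nat -> R) (x : 'rV[R]_n) (t : R) : R :=
  (Cmx p *m expmx (t *: Amx p delta) *m eta0 p F phi delta x) 0 0.

End Defs.

From HB Require Import structures.
From mathcomp Require Import all_boot all_order all_algebra.
From mathcomp Require Import all_classical all_reals all_analysis.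
Import Order.TTheory GRing.Theory Num.Theory.
Import numFieldNormedType.Exports.
Local Open Scope classical_set_scope.
Local Open Scope ring_scope.
Set Implicit Arguments.
Unset Strict Implicit.
Unset Printing Implicit Defensive.

(* Writing g_j = C A^j eta(x,0), one has eta_1(x,t) = sum_j t^j/j! g_j.  The
   matrix A is entrywise nonnegative, the coordinates 1..p of eta(x,0) are
   nonnegative, and row p of A eta(x,0) equals delta_0 phi(x,0) + delta_p +
   (nonnegative terms) >= eps.  Since the ones on the superdiagonal of A carry
   row p up to row 1, g_j >= 0 for every j >= 1 and g_p >= eps > 0.  Hence for
   0 <= s < t, eta_1(x,t) - eta_1(x,s) >= (t^p - s^p)/p! g_p > 0. *)

Section MatrixExponentialSeries.
Variable R : realType.

Lemma cvgn_mx_entrywise m n (S : nat -> 'M[R]_(m, n)) :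
  (forall i j, cvgn (fun N => S N i j)) -> cvgn S.
Proof.
move=> cvgS; apply: (cvgP (\matrix_(i, j) limn (fun N => S N i j))).
apply/cvg_mx_entourageP => E entE.
apply: filter_forall => i; apply: filter_forall => j.
have /cvg_app_entourageP /(_ E entE) := cvgS i j.
by apply: filterS => N SNij; rewrite mxE; apply/mem_set.
Qed.

Lemma cvg_mx_form m n (F : set_system nat) (FF : Filter F)
    (S : nat -> 'M[R]_(m, n)) (X : 'M[R]_(m, n)) (c : 'rV[R]_m) (w : 'cV[R]_n) :
  S @ F --> X -> (fun N => (c *m S N *m w) 0 0) @ F --> (c *m X *m w) 0 0.
Proof.
have mx_formE (Y : 'M[R]_(m, n)) :
    (c *m Y *m w) 0 0 = \sum_b (\sum_a c 0 a * Y a b) * w b 0.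
  by rewrite mxE; apply: eq_bigr => b _; rewrite mxE.
move=> SX; rewrite mx_formE (funext (fun N => mx_formE (S N))).
apply: cvg_big => //; first exact: add_continuous.
move=> b _; apply: cvgMl; apply: cvg_big => //; first exact: add_continuous.
move=> a _; apply: cvgMr.
exact: (continuous_cvg _ (@coord_continuous _ _ _ a b X) SX).
Qed.

Lemma normr_exprmx_entry k (M : 'M[R]_k) j a b :
  `|(M ^+ j) a b| <= (\sum_i \sum_l `|M i l|) ^+ j.
Proof.
set mu := \sum_i _; have mu_ge0 : 0 <= mu by do 2!apply: sumr_ge0 => ? _.
elim: j a b => [|j IHj] a b.
  by rewrite expr0 !mxE; case: (a == b); rewrite ?normr1 ?normr0.
rewrite exprSr -mulmxE mxE exprSr; apply: (le_trans (ler_norm_sum _ _ _)).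
apply: (@le_trans _ _ (\sum_l mu ^+ j * `|M l b|)).
  by apply: ler_sum => l _; rewrite normrM ler_wpM2r.
rewrite -mulr_sumr ler_wpM2l ?exprn_ge0 //; apply: ler_sum => l _.
by rewrite (bigD1 b) //= lerDl sumr_ge0.
Qed.

Lemma expmx_cvg k (M : 'M[R]_k) :
  series (fun j => (j`!%:R)^-1 *: M ^+ j) @ \oo --> expmx M.
Proof.
apply: cvgn_mx_entrywise => a b.
pose mu := \sum_i \sum_l `|M i l|.
have -> : (fun N => series (fun j => (j`!%:R)^-1 *: M ^+ j) N a b)
    = series (fun j => (j`!%:R)^-1 * (M ^+ j) a b).
  by apply/funext => N; rewrite /series /= summxE; apply: eq_bigr => j _; rewrite mxE.
apply: normed_cvg; apply: (series_le_cvg _ _ _ (is_cvg_series_exp_coeff mu)).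
- by move=> j; exact: normr_ge0.
- by move=> j; apply: exp_coeff_ge0; do 2!apply: sumr_ge0 => ? _.
- move=> j; rewrite /exp_coeff /= normrM normfV normr_nat mulrC.
  by rewrite ler_wpM2r ?invr_ge0 // normr_exprmx_entry.
Qed.

Lemma mx_form_expmx_series k (M : 'M[R]_k.+1) (c : 'rV[R]_k.+1) (w : 'cV[R]_k.+1) t :
  series (fun j => t ^+ j / j`!%:R * (c *m M ^+ j *m w) 0 0) @ \oo -->
  (c *m expmx (t *: M) *m w) 0 0.
Proof.
suff -> : series (fun j => t ^+ j / j`!%:R * (c *m M ^+ j *m w) 0 0) =
    (fun N => (c *m series (fun j => (j`!%:R)^-1 *: (t *: M) ^+ j) N *m w) 0 0).
  by apply: cvg_mx_form; exact: expmx_cvg.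
apply/funext => N; rewrite /series /= mulmx_sumr mulmx_suml summxE.
apply: eq_bigr => j _.
by rewrite exprZn scalerA -scalemxAr -scalemxAl [RHS]mxE [_^-1 * _]mulrC.
Qed.

End MatrixExponentialSeries.

Lemma exp_series_lt (R : realType) (g : R ^nat) (E : R -> R) p :
  (0 < p)%N -> (forall j, (0 < j)%N -> 0 <= g j) -> 0 < g p ->
  (forall t, series (fun j => t ^+ j / j`!%:R * g j) @ \oo --> E t) ->
  forall s t : R, 0 <= s -> s < t -> E s < E t.
Proof.
move=> p_gt0 g_ge0 gp_gt0 E_cvg s t s_ge0 st.
have t_ge0 : 0 <= t := ltW (le_lt_trans s_ge0 st).
have powsp_lt : s ^+ p < t ^+ p by rewrite ltrXn2r // -lt0n.
have term_le j : s ^+ j / j`!%:R * g j <= t ^+ j / j`!%:R * g j.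
  have [->|j_gt0] := posnP j; first by rewrite !expr0.
  by rewrite ler_wpM2r ?g_ge0 // ler_wpM2r ?invr_ge0 // lerXn2r ?nnegrE // ltW.
pose gap := (t ^+ p - s ^+ p) / p`!%:R * g p.
have gap_gt0 : 0 < gap by rewrite !mulr_gt0 ?invr_gt0 ?subr_gt0.
suff : E s + gap <= E t by apply: lt_le_trans; rewrite ltrDl.
apply: (ler_cvg_to (cvgD (E_cvg s) (cvg_cst gap)) (E_cvg t)).
near=> N; have pN : (p < N)%N by near: N; exact: nbhs_infty_gt.
rewrite /series /= addrC -lerBrDr -sumrB big_mkord (bigD1 (Ordinal pN)) //=.
rewrite ler_wpDr ?sumr_ge0 // => [j _|]; first by rewrite subr_ge0.
by rewrite /gap !mulrBl.
Unshelve. all: by end_near.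
Qed.

Section NonnegativeMatrices.
Variable R : numDomainType.

Definition nonneg_mx {m n} (M : 'M[R]_(m, n)) := forall i j, 0 <= M i j.

Lemma nonneg_mulmx m n q (M : 'M[R]_(m, n)) (N : 'M[R]_(n, q)) :
  nonneg_mx M -> nonneg_mx N -> nonneg_mx (M *m N).
Proof. by move=> M_ge0 N_ge0 i j; rewrite mxE sumr_ge0 // => l _; rewrite mulr_ge0. Qed.

Lemma nonneg_exprmx k (M : 'M[R]_k) j : nonneg_mx M -> nonneg_mx (M ^+ j).
Proof.
move=> M_ge0; elim: j => [|j IHj]; first by move=> a b; rewrite expr0 mxE ler0n.
by rewrite exprS -mulmxE; exact: nonneg_mulmx.
Qed.

Lemma mulmx_ge_term m n q (M : 'M[R]_(m, n)) (N : 'M[R]_(n, q)) i l j :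
  nonneg_mx M -> nonneg_mx N -> M i l * N l j <= (M *m N) i j.
Proof.
move=> M_ge0 N_ge0; rewrite mxE (bigD1 l) //= lerDl.
by rewrite sumr_ge0 // => l' _; rewrite mulr_ge0.
Qed.

End NonnegativeMatrices.

Lemma Cmx_mulmx (R : realType) p (w : 'cV[R]_p.+1) : (Cmx R p *m w) 0 0 = w 0 0.
Proof.
rewrite mxE (bigD1 0) //= big1 => [|i i_neq0]; first by rewrite !mxE mul1r addr0.
by rewrite mxE ifN ?mul0r.
Qed.

Section PositivityOfAmx.
Variables (R : realType) (p : nat) (delta : nat -> R).
Hypothesis p_gt0 : (0 < p)%N.
Hypothesis delta_ge0 : forall i, (i < p)%N -> 0 <= delta i.
Local Notation A := (Amx p delta).

Lemma Amx_nonneg : nonneg_mx A.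
Proof.
move=> i j; rewrite mxE; case: ifP => _; first by case: ifP.
by case: ifP => // _; case: ifP => // /delta_ge0.
Qed.

Lemma Amx_superdiag k : (k.+1 < p)%N -> A (inord k) (inord k.+1) = 1.
Proof.
move=> kp; have k_lt : (k < p.+1)%N by rewrite ltnS ltnW // ltnW.
by rewrite mxE !inordK ?kp ?eqxx // ltnS ltnW.
Qed.

Lemma Amx_col0 (i : 'I_p.+1) : i != p.-1 :> nat -> A i 0 = 0.
Proof. by move=> /negbTE i_neq; rewrite mxE i_neq; case: ifP. Qed.

Lemma Amx_row_delta j : A (inord p.-1) j = if (j < p)%N then delta j else 1.
Proof. by rewrite mxE inordK ?prednK ?ltnn ?eqxx // ltnW. Qed.

Lemma exprAmx_mul_ge_entry (u : 'cV[R]_p.+1) k :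
  nonneg_mx u -> (k < p)%N -> u (inord k) 0 <= (A ^+ k *m u) 0 0.
Proof.
elim: k u => [|k IHk] u u_ge0 kp.
  by rewrite expr0 mul1mx (_ : inord 0 = 0) //; apply/val_inj; rewrite /= inordK.
rewrite exprSr -mulmxE -mulmxA.
apply: le_trans (IHk _ (nonneg_mulmx Amx_nonneg u_ge0) (ltnW kp)).
rewrite -[u _ 0]mul1r -(Amx_superdiag kp).
exact: mulmx_ge_term Amx_nonneg u_ge0.
Qed.

Variables (eps : R) (v : 'cV[R]_p.+1).
Hypothesis eps_gt0 : 0 < eps.
Hypothesis v_ge0 : forall i : 'I_p.+1, i != 0 :> nat -> 0 <= v i 0.
Hypothesis v_eps : eps <= delta 0 * v 0 0 + v ord_max 0.

Lemma Amx_mul_row_ge_eps : eps <= (A *m v) (inord p.-1) 0.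
Proof.
rewrite mxE (bigD1 0) //= (bigD1 ord_max) //=; last by rewrite -(inj_eq val_inj) /= -lt0n.
rewrite !Amx_row_delta /= p_gt0 ltnn mul1r addrA; apply: (le_trans v_eps).
rewrite lerDl sumr_ge0 // => i /andP[i_neq0 _].
by rewrite mulr_ge0 ?Amx_nonneg ?v_ge0.
Qed.

Lemma Amx_mul_nonneg : nonneg_mx (A *m v).
Proof.
move=> i j; rewrite (ord1 j); have [i_eq|i_neq] := eqVneq (i : nat) p.-1.
  have -> : i = inord p.-1 by apply/val_inj; rewrite /= inordK -i_eq.
  exact: le_trans (ltW eps_gt0) Amx_mul_row_ge_eps.
rewrite mxE (bigD1 0) //= Amx_col0 // mul0r add0r sumr_ge0 // => l l_neq0.
by rewrite mulr_ge0 ?Amx_nonneg ?v_ge0.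
Qed.

Lemma exprAmx_mul_ge0 j : (0 < j)%N -> 0 <= (A ^+ j *m v) 0 0.
Proof.
case: j => // j _; rewrite exprSr -mulmxE -mulmxA.
exact: nonneg_mulmx (nonneg_exprmx _ Amx_nonneg) Amx_mul_nonneg _ _.
Qed.

Lemma exprAmx_mul_ge_eps : eps <= (A ^+ p *m v) 0 0.
Proof.
have -> : A ^+ p = A ^+ p.-1 * A by rewrite -exprSr prednK.
rewrite -mulmxE -mulmxA; apply: le_trans Amx_mul_row_ge_eps _.
by apply: exprAmx_mul_ge_entry; [exact: Amx_mul_nonneg | rewrite prednK].
Qed.

End PositivityOfAmx.

Theorem proposition5 (R : realType) (n m : nat)
  (f : 'rV[R]_n -> 'rV[R]_m -> 'rV[R]_n) (ups : 'rV[R]_n -> 'rV[R]_m)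
  (phi : 'rV[R]_(n + n) -> R) (xi : 'rV[R]_n -> R -> 'rV[R]_(n + n))
  (alpha theta : R) (Z : set 'rV[R]_n) (Xi : set 'rV[R]_(n + n))
  (* xi(.;x) is the (forward) solution of d/dt xi = F(xi), xi(0;x) = (x,0) *)
  (Hxi0 : forall x, xi x 0 = row_mx x 0)
  (Hxicont : forall x, {within `[0, +oo[, continuous (xi x)})
  (Hxider : forall (x : 'rV[R]_n) (t : R), 0 < t -> is_derive t 1 (xi x) (Fsys f ups (xi x t)))
  (* (i) *)
  (HFsmooth : smooth (Fsys f ups)) (Halpha : 1 <= alpha)
  (HFhom : homogeneous alpha (Fsys f ups))
  (* (ii) *)
  (Hphismooth : smooth phi) (Htheta : 1 <= theta)
  (Hphihom : homogeneous theta phi)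
  (* (iii) *)
  (Hphineg : forall x : 'rV[R]_n, x != 0 -> phi (row_mx x 0) < 0)
  (Htx : forall x : 'rV[R]_n, x != 0 -> exists tx : R, 0 < tx /\ phi (xi x tx) = 0)
  (* (iv) *)
  (HZ : compact Z) (HZ0 : nbhs (0 : 'rV[R]_n) Z)
  (HXi : compact Xi) (HXi0 : nbhs (0 : 'rV[R]_(n + n)) Xi)
  (HZXi : forall (x : 'rV[R]_n) (t : R), Z x -> 0 <= t -> phi (xi x t) <= 0 -> Xi (xi x t))
  (* (v) *)
  (Heq : forall zeta : 'rV[R]_n, f zeta (ups zeta) = 0 <-> zeta = 0)
  (* proposition hypotheses *)
  (d : R) (Hd : 0 < d) (HXid : forall z : 'rV[R]_(n + n), Xi z -> enorm z < d)
  (p : nat) (Hp : (1 <= p)%N) (eps : R) (Heps : 0 < eps) (delta : nat -> R)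
  (Hlie : forall z : 'rV[R]_(n + n), enorm z < d ->
     lieN p (Fsys f ups) phi z
       <= \sum_(i < p) delta i * lieN i (Fsys f ups) phi z + delta p)
  (Hdeps : forall x : 'rV[R]_n, Z x -> eps <= delta 0%N * phi (row_mx x 0) + delta p)
  (Hdpos : forall i, (i <= p)%N -> 0 <= delta i) :
  forall x : 'rV[R]_n, Z x -> forall s t : R, 0 < s -> s < t ->
    eta1 p (Fsys f ups) phi delta x s < eta1 p (Fsys f ups) phi delta x t.
Proof.
move=> x Zx s t s_gt0 st.
set v := eta0 p (Fsys f ups) phi delta x.
have delta_ge0 i : (i < p)%N -> 0 <= delta i by move/ltnW; exact: Hdpos.
have v_ge0 (i : 'I_p.+1) : i != 0 :> nat -> 0 <= v i 0.
  move=> /negbTE i_neq0; rewrite mxE i_neq0; case: ifP => _; last exact: Hdpos.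
  by rewrite le_max lexx orbT.
have v_eps : eps <= delta 0 * v 0 0 + v ord_max 0.
  by rewrite !mxE /= ltnn (gtn_eqF Hp); exact: Hdeps.
pose g j := (Cmx R p *m Amx p delta ^+ j *m v) 0 0.
have gE j : g j = (Amx p delta ^+ j *m v) 0 0 by rewrite /g -mulmxA Cmx_mulmx.
apply: (exp_series_lt (g := g) Hp _ _ _ (ltW s_gt0) st).
- by move=> j j_gt0; rewrite gE (exprAmx_mul_ge0 Hp delta_ge0 Heps v_ge0 v_eps).
- by rewrite gE (lt_le_trans Heps) // (exprAmx_mul_ge_eps Hp delta_ge0 Heps v_ge0).
- by move=> r; exact: mx_form_expmx_series.
Qed.
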